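(* Let $n\ge 1$ and let $s,t$ be nonnegative integers. Two players independently each open one cereal box per time step; each box contains one of $n$ coupon types, chosen uniformly at random and independently of everything else. The first player is currently missing $s$ of the $n$ coupon types and the second player is missing $t$ of them. Let $X_1(s)$ and $X_2(t)$ be the number of boxes the first, respectively second, player must open until they have all $n$ coupon types, and let $$M(s,t):=\mathbb{E}\left[\max\{X_1(s),X_2(t)\}\right].$$ Equivalently, $M$ is determined by $M(0,0)=0$, $M(s,t)=0$ if $s<0$ or $t<0$, and the recurrence $$M(s,t)=\tfrac{s}{n}\left(1-\tfrac{t}{n}\right)M(s-1,t)+\left(1-\tfrac{s}{n}\right)\tfrac{t}{n}M(s,t-1)+\tfrac{s}{n}\cdot\tfrac{t}{n}M(s-1,t-1)+\left(1-\tfrac{s}{n}\right)\left(1-\tfrac{t}{n}\right)M(s,t)+1.$$ Then $$M(s,t)=nH(s+t)-\frac{\left(H(s+t)-1\right)st}{(s+t)(s+t-1)}+o(1).$$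
   Context: $H(m)=\sum_{j=1}^m \frac1j$ denotes the $m$-th harmonic number. The term $o(1)$ denotes a quantity tending to $0$ as $n\to\infty$ with $s,t$ fixed. *)

From Stdlib Require Import Reals.
From Coquelicot Require Import Coquelicot.
Open Scope R_scope.

Fixpoint H (m : nat) : R :=
  match m with
  | O => 0
  | S k => H k + / INR (S k)
  end.

(* Terms with s-1 (resp. t-1) only appear multiplied by
   s/n (resp. t/n), so the convention M(s,t)=0 for negative indices is
   irrelevant (truncated nat subtraction is harmless). *)
Definition coupon_rec (M : nat -> nat -> nat -> R) : Prop :=
  (forall n : nat, (1 <= n)%nat -> M n 0%nat 0%nat = 0) /\
  (forall n s t : nat, (1 <= n)%nat -> (s <= n)%nat -> (t <= n)%nat ->
     (s + t <> 0)%nat ->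
     let p := INR s / INR n in
     let q := INR t / INR n in
     M n s t =
       p * (1 - q) * M n (s - 1)%nat t
     + (1 - p) * q * M n s (t - 1)%nat
     + p * q * M n (s - 1)%nat (t - 1)%nat
     + (1 - p) * (1 - q) * M n s t + 1).

(* Main term n H(s+t) - (H(s+t)-1) s t / ((s+t)(s+t-1)).
   When s+t <= 1 we have s t = 0 and the correction term is 0. *)
Definition approx (n s t : nat) : R :=
  INR n * H (s + t) -
  (H (s + t) - 1) * INR s * INR t / (INR (s + t) * (INR (s + t) - 1)).

From Stdlib Require Import Reals Lra Lia.
From Coquelicot Require Import Coquelicot.
Open Scope R_scope.

(* Write M(s,t) = n a(s,t) + b(s,t) + e_n(s,t), where a(s,t) = H(s+t) and b is
   the correction term of approx.  Multiplied by n^2 the recurrence reads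
     M(s,t) ((s+t) n - s t)
       = s (n-t) M(s-1,t) + t (n-s) M(s,t-1) + s t M(s-1,t-1) + n^2.
   The coefficients of n^2 and n cancel in the ansatz, since
   (s+t) a(s,t) = s a(s-1,t) + t a(s,t-1) + 1 and b satisfies the matching
   first-order recurrence.  Hence
     e_n(s,t) ((s+t) n - s t) = (n-t) s e_n(s-1,t) + (n-s) t e_n(s,t-1) + O(1),
   and dividing by n gives e_n(s,t) -> 0 by induction on s+t. *)

Definition approx_slope (s t : nat) : R := H (s + t).

Definition approx_offset (s t : nat) : R :=
  - ((H (s + t) - 1) * INR s * INR t / (INR (s + t) * (INR (s + t) - 1))).

Lemma approx_slope_offset n s t :
  approx n s t = INR n * approx_slope s t + approx_offset s t.
Proof. reflexivity. Qed.

Lemma H_S k : H (S k) = H k + / INR (S k).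
Proof. reflexivity. Qed.

Lemma approx_slope_rec s t : (s + t <> 0)%nat ->
  approx_slope s t * (INR s + INR t) =
  INR s * approx_slope (s - 1) t + INR t * approx_slope s (t - 1) + 1.
Proof.
  intros Hst. destruct (s + t)%nat as [|m] eqn:Hm; [lia|].
  assert (HA : INR s * approx_slope (s - 1) t = INR s * H m).
  { destruct s; [simpl; ring|]. unfold approx_slope. do 3 f_equal. lia. }
  assert (HB : INR t * approx_slope s (t - 1) = INR t * H m).
  { destruct t; [simpl; ring|]. unfold approx_slope. do 3 f_equal. lia. }
  unfold approx_slope at 1.
  rewrite HA, HB, <- Rmult_plus_distr_r, <- plus_INR, Hm, H_S.
  field. apply not_0_INR. lia.
Qed.

Lemma approx_offset_rec s t : (s + t <> 0)%nat ->
  approx_offset s t * (INR s + INR t) =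
  INR s * INR t * approx_slope s t
  + INR s * approx_offset (s - 1) t + INR t * approx_offset s (t - 1)
  + INR s * INR t * (approx_slope (s - 1) (t - 1)
                     - approx_slope (s - 1) t - approx_slope s (t - 1)).
Proof.
  intros Hst. destruct s as [|s]; [unfold approx_offset; simpl; lra|].
  destruct t as [|t]; [unfold approx_offset; simpl; lra|].
  unfold approx_slope, approx_offset.
  replace (S s - 1)%nat with s by lia. replace (S t - 1)%nat with t by lia.
  replace (S s + S t)%nat with (S (S (s + t))) by lia.
  replace (s + S t)%nat with (S (s + t)) by lia.
  replace (S s + t)%nat with (S (s + t)) by lia.
  rewrite !H_S, !S_INR, !plus_INR.
  destruct (Nat.eq_dec (s + t) 0) as [Hm0|Hm0].
  - replace s with 0%nat by lia. replace t with 0%nat by lia. simpl.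
    (* the divisions by 0 occur in offsets carrying the factor INR 0 *)
    unfold Rdiv. rewrite !Rmult_0_r, !Rmult_0_l. field.
  - assert (0 < INR s + INR t) by (rewrite <- plus_INR; apply lt_0_INR; lia).
    pose proof (pos_INR s). pose proof (pos_INR t).
    field. repeat split; lra.
Qed.

Lemma coupon_step_cleared (n s t M A B C : R) : n <> 0 ->
  M = s / n * (1 - t / n) * A + (1 - s / n) * (t / n) * B
      + s / n * (t / n) * C + (1 - s / n) * (1 - t / n) * M + 1 ->
  M * ((s + t) * n - s * t) = s * (n - t) * A + t * (n - s) * B + s * t * C + n * n.
Proof.
  intros Hn E. apply Rminus_diag_uniq.
  transitivity (n * n * (M - (s / n * (1 - t / n) * A + (1 - s / n) * (t / n) * B
      + s / n * (t / n) * C + (1 - s / n) * (1 - t / n) * M + 1))).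
  - field. exact Hn.
  - rewrite <- E. ring.
Qed.

Lemma two_term_error_rec (n s t M A B C a b aA aB aC bA bB bC : R) :
  a * (s + t) = s * aA + t * aB + 1 ->
  b * (s + t) = s * t * a + s * bA + t * bB + s * t * (aC - aA - aB) ->
  M * ((s + t) * n - s * t) = s * (n - t) * A + t * (n - s) * B + s * t * C + n * n ->
  (M - (n * a + b)) * ((s + t) * n - s * t) =
  (n - t) * (s * (A - (n * aA + bA))) + (n - s) * (t * (B - (n * aB + bB)))
  + (s * t * (C - (n * aC + bC)) + s * t * (bC - bA - bB + b)).
Proof.
  intros Ea Eb EM. apply Rminus_diag_uniq.
  transitivity (M * ((s + t) * n - s * t)
                - (s * (n - t) * A + t * (n - s) * B + s * t * C + n * n)
                - n * n * (a * (s + t) - (s * aA + t * aB + 1))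
                - n * (b * (s + t) - (s * t * a + s * bA + t * bB + s * t * (aC - aA - aB)))).
  - ring.
  - rewrite EM, Ea, Eb. ring.
Qed.

Lemma is_lim_seq_Rinv_INR : is_lim_seq (fun n => / INR n) 0.
Proof.
  apply (is_lim_seq_inv _ _ is_lim_seq_INR). discriminate.
Qed.

Lemma is_lim_seq_one_sub_Rinv_INR (r : R) : is_lim_seq (fun n => 1 - r * / INR n) 1.
Proof.
  pose proof (is_lim_seq_minus' _ _ _ _ (is_lim_seq_const 1)
    (is_lim_seq_mult' _ _ _ _ (is_lim_seq_const r) is_lim_seq_Rinv_INR)) as L.
  replace (1 - r * 0) with 1 in L by ring. exact L.
Qed.

Lemma is_lim_seq_0_of_error_rec (e a b c : nat -> R) (s t : nat) (l : R) :
  (s + t <> 0)%nat ->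
  (forall n, (s + t <= n)%nat ->
     e n * ((INR s + INR t) * INR n - INR s * INR t) =
     (INR n - INR t) * a n + (INR n - INR s) * b n + c n) ->
  is_lim_seq a 0 -> is_lim_seq b 0 -> is_lim_seq c l ->
  is_lim_seq e 0.
Proof.
  intros Hst Erec La Lb Lc.
  assert (Hx : 0 < INR s + INR t) by (rewrite <- plus_INR; apply lt_0_INR; lia).
  pose proof (is_lim_seq_plus' _ _ _ _
    (is_lim_seq_plus' _ _ _ _
       (is_lim_seq_mult' _ _ _ _ La (is_lim_seq_one_sub_Rinv_INR (INR t)))
       (is_lim_seq_mult' _ _ _ _ Lb (is_lim_seq_one_sub_Rinv_INR (INR s))))
    (is_lim_seq_mult' _ _ _ _ Lc is_lim_seq_Rinv_INR)) as Lnum.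
  pose proof (is_lim_seq_minus' _ _ _ _ (is_lim_seq_const (INR s + INR t))
    (is_lim_seq_mult' _ _ _ _ (is_lim_seq_const (INR s * INR t)) is_lim_seq_Rinv_INR))
    as Lden.
  pose proof (is_lim_seq_div' _ _ _ _ Lnum Lden ltac:(lra)) as L.
  replace ((0 * 1 + 0 * 1 + l * 0) / (INR s + INR t - INR s * INR t * 0)) with 0 in L
    by (field; lra).
  refine (is_lim_seq_ext_loc _ _ _ _ L). exists (s + t)%nat. intros n Hn. cbv beta.
  pose proof (pos_INR s). pose proof (pos_INR t).
  assert (Hn' : INR s + INR t <= INR n) by (rewrite <- plus_INR; apply le_INR; exact Hn).
  assert (Hd : 0 < (INR s + INR t) * INR n - INR s * INR t) by nra.
  replace (e n) with (((INR n - INR t) * a n + (INR n - INR s) * b n + c n)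
                      / ((INR s + INR t) * INR n - INR s * INR t))
    by (rewrite <- Erec by exact Hn; field; lra).
  field. split; lra.
Qed.

Lemma coupon_rec_cleared (M : nat -> nat -> nat -> R) (n s t : nat) :
  coupon_rec M -> (s + t <= n)%nat -> (s + t <> 0)%nat ->
  M n s t * ((INR s + INR t) * INR n - INR s * INR t) =
  INR s * (INR n - INR t) * M n (s - 1)%nat t
  + INR t * (INR n - INR s) * M n s (t - 1)%nat
  + INR s * INR t * M n (s - 1)%nat (t - 1)%nat + INR n * INR n.
Proof.
  intros [_ Hrec] Hn Hst. apply coupon_step_cleared.
  - apply not_0_INR. lia.
  - apply Hrec; lia.
Qed.

Definition coupon_error (M : nat -> nat -> nat -> R) (n s t : nat) : R :=
  M n s t - approx n s t.

Lemma coupon_error_rec (M : nat -> nat -> nat -> R) (n s t : nat) :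
  coupon_rec M -> (s + t <= n)%nat -> (s + t <> 0)%nat ->
  coupon_error M n s t * ((INR s + INR t) * INR n - INR s * INR t) =
  (INR n - INR t) * (INR s * coupon_error M n (s - 1) t)
  + (INR n - INR s) * (INR t * coupon_error M n s (t - 1))
  + (INR s * INR t * coupon_error M n (s - 1) (t - 1)
     + INR s * INR t * (approx_offset (s - 1) (t - 1) - approx_offset (s - 1) t
                        - approx_offset s (t - 1) + approx_offset s t)).
Proof.
  intros HM Hn Hst. unfold coupon_error. rewrite !approx_slope_offset.
  apply two_term_error_rec.
  - apply approx_slope_rec, Hst.
  - apply approx_offset_rec, Hst.
  - apply coupon_rec_cleared; assumption.
Qed.

Lemma coupon_error_0_0 (M : nat -> nat -> nat -> R) (n : nat) :
  coupon_rec M -> (1 <= n)%nat -> coupon_error M n 0 0 = 0.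
Proof.
  intros [HM00 _] Hn. unfold coupon_error, approx. rewrite HM00 by exact Hn.
  simpl. unfold Rdiv. ring.
Qed.

Theorem mainTheorem1 :
  forall (s t : nat) (M : nat -> nat -> nat -> R),
    coupon_rec M ->
    is_lim_seq (fun n : nat => M n s t - approx n s t) 0.
Proof.
  intros s0 t0 M HM. change (is_lim_seq (fun n => coupon_error M n s0 t0) 0).
  enough (IH : forall k s t, (s + t <= k)%nat ->
            is_lim_seq (fun n => coupon_error M n s t) 0) by (apply (IH (s0 + t0)%nat); lia).
  induction k as [|k IHk]; intros s t Hst.
  - replace s with 0%nat by lia. replace t with 0%nat by lia.
    refine (is_lim_seq_ext_loc _ _ _ _ (is_lim_seq_const 0)).
    exists 1%nat. intros n Hn. symmetry. apply coupon_error_0_0; assumption.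
  - destruct (Nat.eq_dec (s + t) 0) as [Hst0|Hst0]; [apply IHk; lia|].
    assert (Lweighted : forall (w : R) s' t', w = 0 \/ (s' + t' <= k)%nat ->
              is_lim_seq (fun n => w * coupon_error M n s' t') 0).
    { intros w s' t' [-> | Hk].
      - refine (is_lim_seq_ext _ _ _ _ (is_lim_seq_const 0)). intros n. ring.
      - pose proof (is_lim_seq_mult' _ _ _ _ (is_lim_seq_const w) (IHk s' t' Hk)) as L.
        rewrite Rmult_0_r in L. exact L. }
    eapply (is_lim_seq_0_of_error_rec _ _ _ _ s t _ Hst0
              (fun n Hn => coupon_error_rec M n s t HM Hn Hst0)).
    + apply Lweighted. destruct s; [left; reflexivity | right; lia].
    + apply Lweighted. destruct t; [left; reflexivity | right; lia].
    + apply is_lim_seq_plus'; [apply Lweighted | apply is_lim_seq_const].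
      destruct s; [left; simpl; ring|]. destruct t; [left; simpl; ring | right; lia].
Qed.
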